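(* Let $m\in\mathbb{N}$ be odd and write $m=2k+1$. Then the friendship graph $F_{\lfloor m/2\rfloor}=F_k$ is $\mathbb{Z}_m$-cordial.
   Context: Graphs are finite, simple and undirected. For $n\in\mathbb{N}$, the friendship graph $F_n$ is the union of $n$ copies of the triangle $C_3$ joined at a single common (central) vertex. For an abelian group $A$ and a graph $G=(V,E)$, a vertex labeling $\ell:V\to A$ induces an edge labeling $\ell(\{v_1,v_2\})=\ell(v_1)+\ell(v_2)$. Let $f_V(a)=|\{v\in V:\ell(v)=a\}|$ and $f_E(a)=|\{e\in E:\ell(e)=a\}|$. The labeling is $A$-cordial if $|f_V(a_1)-f_V(a_2)|\le 1$ and $|f_E(a_1)-f_E(a_2)|\le 1$ for all $a_1,a_2\in A$; $G$ is $A$-cordial if it admits an $A$-cordial labeling. *)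

From mathcomp Require Import all_boot all_order all_algebra.
Set Implicit Arguments. Unset Strict Implicit. Unset Printing Implicit Defensive.
Import GRing.Theory.
Local Open Scope ring_scope.

Record sgraph := SGraph {
  vert :> finType;
  adj : rel vert;
  adj_sym : symmetric adj;
  adj_irr : irreflexive adj }.

(* Edges are unordered pairs {x,y}; we represent each edge once by the
   ordered pair (x,y) with enum_rank x < enum_rank y. *)
Definition edges (G : sgraph) : {set G * G} :=
  [set p | adj p.1 p.2 && (enum_rank p.1 < enum_rank p.2)%N].

Definition fV (G : sgraph) (A : finZmodType) (l : G -> A) (a : A) : nat :=
  #|[set v : G | l v == a]|.
Definition fE (G : sgraph) (A : finZmodType) (l : G -> A) (a : A) : nat :=
  #|[set p in edges G | l p.1 + l p.2 == a]|.

Definition cordial_labeling (G : sgraph) (A : finZmodType) (l : G -> A) :=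
  forall a1 a2 : A,
    (fV l a1 <= (fV l a2).+1)%N /\ (fE l a1 <= (fE l a2).+1)%N.

Definition A_cordial (A : finZmodType) (G : sgraph) :=
  exists l : G -> A, cordial_labeling l.

(* Friendship graph F_n: central vertex None, and triangle i consists of
   None, Some (i,false), Some (i,true). *)
Definition fr_adj (n : nat) : rel (option ('I_n * bool)) :=
  fun x y => match x, y with
  | None, None => false
  | None, Some _ | Some _, None => true
  | Some (i, b), Some (j, c) => (i == j) && (b != c)
  end.

Lemma fr_adj_sym n : symmetric (@fr_adj n).
Proof.
move=> [[i b]|] [[j c]|] //=; by rewrite (eq_sym i) (eq_sym b).
Qed.

Lemma fr_adj_irr n : irreflexive (@fr_adj n).
Proof. by move=> [[i b]|] //=; rewrite !eqxx. Qed.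

Definition friendship (n : nat) : sgraph :=
  SGraph (@fr_adj_sym n) (@fr_adj_irr n).

From mathcomp Require Import all_boot all_order all_algebra zify.
Import GRing.Theory.

Set Implicit Arguments.
Unset Strict Implicit.
Unset Printing Implicit Defensive.

(* Label the centre 0 and the outer vertices of triangle i by i+1 and i+k+2,
   except for the last triangle, which gets k and k+1.  This is a bijection
   onto Z_(2k+1), so every vertex count is 1, and the spokes realise every
   nonzero residue exactly once.  The rim of triangle i < k-1 sums to 2i+k+3;
   these sums are distinct mod 2k+1 because 2 is invertible modulo an odd
   number, while the last rim sums to 0.  Hence every residue is the label of
   one or two edges. *)

Definition sort_pair {T : finType} (p : T * T) : T * T :=
  if enum_rank p.1 < enum_rank p.2 then p else (p.2, p.1).

Lemma sort_pair_cases (T : finType) (p : T * T) :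
  sort_pair p = p \/ sort_pair p = (p.2, p.1).
Proof. by rewrite /sort_pair; case: ifP; [left | right]. Qed.

Lemma sort_pairC (T : finType) (x y : T) :
  x != y -> sort_pair (y, x) = sort_pair (x, y).
Proof.
move=> neq_xy; rewrite /sort_pair /=.
case: ltngtP => // /val_inj/enum_rank_inj eq_yx.
by rewrite eq_yx eqxx in neq_xy.
Qed.

Lemma adj_neq (G : sgraph) (x y : G) : adj x y -> x != y.
Proof. by apply: contraTneq => ->; rewrite adj_irr. Qed.

Lemma edgesP (G : sgraph) (p : G * G) :
  p \in edges G -> adj p.1 p.2 /\ sort_pair p = p.
Proof. by rewrite inE => /andP[adj_p lt_p]; rewrite /sort_pair lt_p. Qed.

Lemma sort_pair_edges (G : sgraph) (p : G * G) :
  adj p.1 p.2 -> sort_pair p \in edges G.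
Proof.
case: p => x y /= adj_xy; rewrite inE /sort_pair /=.
case: ltngtP => [lt_xy | lt_yx | /val_inj/enum_rank_inj eq_xy] /=.
- by rewrite adj_xy.
- by rewrite adj_sym adj_xy.
- by rewrite eq_xy adj_irr in adj_xy.
Qed.

Lemma card_edges_enum (G : sgraph) (T : finType) (e : T -> G * G) (P : rel G) :
  symmetric P ->
  (forall t, adj (e t).1 (e t).2) ->
  (forall x y, adj x y -> exists t, e t = (x, y) \/ e t = (y, x)) ->
  injective (sort_pair \o e) ->
  #|[set p in edges G | P p.1 p.2]| = #|[set t | P (e t).1 (e t).2]|.
Proof.
move=> symP adj_e onto_e inj_e.
have P_sort q : P (sort_pair q).1 (sort_pair q).2 = P q.1 q.2.
  by case: (sort_pair_cases q) => ->; rewrite // symP.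
rewrite -(card_imset _ inj_e); apply: eq_card => p; rewrite [in LHS]inE.
apply/andP/imsetP => [[/edgesP[adj_p sort_p] Pp] | [t Pt ->]].
- case: p adj_p sort_p Pp => x y /= adj_xy sort_xy Pxy.
  have [t e_t] := onto_e x y adj_xy; exists t.
    by rewrite inE; case: e_t => ->; rewrite //= symP.
  case: e_t => /= ->; first by rewrite sort_xy.
  by rewrite sort_pairC ?adj_neq ?sort_xy.
- by rewrite inE in Pt; rewrite /= sort_pair_edges ?P_sort.
Qed.

Lemma fV_bij (G : sgraph) (A : finZmodType) (l : G -> A) (a : A) :
  bijective l -> fV l a = 1.
Proof.
case=> g lK gK; rewrite /fV -(cards1 (g a)); apply: eq_card => v.
by rewrite !inE -{1}(gK a) (can_eq lK).
Qed.

Lemma cordial_labeling_bij (G : sgraph) (A : finZmodType) (l : G -> A) (c : nat) :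
  bijective l -> (forall a, c <= fE l a <= c.+1) -> cordial_labeling l.
Proof.
move=> bij_l fE_bounds a1 a2; rewrite !fV_bij //; split=> //.
by case/andP: (fE_bounds a1) => _ /leq_trans->; case/andP: (fE_bounds a2).
Qed.

Section FriendshipLabelings.

Variables (k : nat) (A : finZmodType) (l : friendship k -> A).

Definition fr_edge (t : ('I_k * bool) + 'I_k) : friendship k * friendship k :=
  match t with
  | inl v => (None, Some v)
  | inr i => (Some (i, false), Some (i, true))
  end.

Lemma fE_friendship (a : A) :
  fE l a = #|[set v | (l None + l (Some v) == a)%R]|
         + #|[set i | (l (Some (i, false)) + l (Some (i, true)) == a)%R]|.
Proof.
rewrite /fE (@card_edges_enum _ _ fr_edge (fun x y => (l x + l y == a)%R)).
- by rewrite -!sum1dep_card big_sumType.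
- by move=> x y /=; rewrite addrC.
- by case=> [v | i] //=; rewrite eqxx.
- move=> [[i b] |] [[j c] |] //=; last by exists (inl (j, c)); left.
    by case/andP=> /eqP <-; case: b; case: c => // _; exists (inr i); [right | left].
  by exists (inl (i, b)); right.
- move=> t1 t2 /=.
  case: (sort_pair_cases (fr_edge t1)) => ->.
  all: case: (sort_pair_cases (fr_edge t2)) => ->.
  all: by case: t1 => [?|?]; case: t2 => [?|?] //= [] *; subst.
Qed.

Lemma card_spokes_bij (a : A) : bijective l -> l None = 0%R ->
  #|[set v | (l None + l (Some v) == a)%R]| = (a != 0%R).
Proof.
case=> g lK gK l0; rewrite l0.
have ->: [set v | (0 + l (Some v) == a)%R] = [set v | Some v == g a].
  by apply/setP => v; rewrite !inE add0r -{1}(gK a) (can_eq lK).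
case E : (g a) => [w |].
- rewrite (_ : [set _ | _] = [set w]) ?cards1; last by apply/setP => v; rewrite !inE.
  by rewrite -(gK a) -l0 (can_eq lK) E.
- rewrite (_ : [set _ | _] = set0) ?cards0; last by apply/setP => v; rewrite !inE.
  by rewrite -(gK a) E l0 eqxx.
Qed.

End FriendshipLabelings.

Lemma double_modn_inj (m c i j : nat) : odd m -> i < m -> j < m ->
  i.*2 + c = j.*2 + c %[mod m] -> i = j.
Proof.
move=> odd_m; wlog le_ij : i j / i <= j.
  by move=> wlog_ij lt_im lt_jm eq_ij; case: (leqP i j) => [|/ltnW] le;
    [apply: wlog_ij | symmetry; apply: wlog_ij].
move=> _ lt_jm /eqP; rewrite eqn_modDr eq_sym eqn_mod_dvd ?leq_double //.
rewrite -doubleB -mul2n Gauss_dvdr ?coprimen2 // => /dvdn_leq; lia.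
Qed.

Lemma card_fiber_le1 (T : finType) (U : eqType) (D : {pred T}) (f : T -> U) (u : U) :
  {in D &, injective f} -> #|[set x in D | f x == u]| <= 1.
Proof.
move=> inj_f; apply/card_le1P => x; rewrite inE => /andP[Dx /eqP fx] y.
rewrite !inE; apply/andP/eqP => [[Dy /eqP fy] | ->]; last by rewrite Dx fx.
by apply: inj_f; rewrite // fx fy.
Qed.

Section CordialFriendship.

Variable k : nat.

Definition fr_label_nat (v : friendship k) : nat :=
  match v with
  | None => 0
  | Some (i, false) => i.+1
  | Some (i, true) => if i.+1 == k then k.+1 else i + k.+2
  end.

Definition fr_label (v : friendship k) : 'I_(k.*2.+1) := inord (fr_label_nat v).

Lemma val_fr_label v : val (fr_label v) = fr_label_nat v.
Proof.
apply: inordK; case: v => [[[i lt_ik] []] |] //=; try case: eqP => /=; lia.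
Qed.

Lemma fr_label_inj : injective fr_label.
Proof.
move=> v w /(congr1 val); rewrite !val_fr_label.
case: v w => [[[i lt_ik] []] |] [[[j lt_jk] []] |] //=;
  repeat case: eqP => /= ?; move=> eq_ij; try lia.
all: by congr (Some (_, _)); apply: val_inj => /=; lia.
Qed.

Lemma fr_label_bij : bijective fr_label.
Proof.
apply: inj_card_bij; first exact: fr_label_inj.
by rewrite /= card_option card_prod card_bool !card_ord; lia.
Qed.

Lemma fr_label_None : fr_label None = 0%R.
Proof. by apply: val_inj; rewrite val_fr_label. Qed.

Definition rim_sum (i : 'I_k) : 'I_(k.*2.+1) :=
  (fr_label (Some (i, false)) + fr_label (Some (i, true)))%R.

Lemma val_rim_sum i :
  val (rim_sum i) = if i.+1 == k then 0 else (i.*2 + k.+3) %% k.*2.+1.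
Proof.
rewrite /= !val_fr_label /=; case: eqP => [last_i | _].
  by rewrite (_ : i.+1 + k.+1 = k.*2.+1) ?modnn //; lia.
by congr (_ %% _); lia.
Qed.

Lemma rim_sum_inj : {in [pred i : 'I_k | i.+1 != k] &, injective rim_sum}.
Proof.
move=> i j; rewrite !inE => /negPf last_i /negPf last_j /(congr1 val).
rewrite !val_rim_sum last_i last_j => /double_modn_inj eq_ij.
have lt_ik := ltn_ord i; have lt_jk := ltn_ord j.
by apply: val_inj; apply: eq_ij; rewrite /= ?odd_double //; lia.
Qed.

Lemma rim_sum_last (i : 'I_k) : i.+1 = k -> rim_sum i = 0%R.
Proof. by move=> last_i; apply: val_inj; rewrite val_rim_sum last_i eqxx. Qed.

Lemma card_rim_fiber_le (a : 'I_(k.*2.+1)) :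
  #|[set i | rim_sum i == a]| <= (a == 0%R).+1.
Proof.
pose D := [pred i : 'I_k | i.+1 != k].
have -> : [set i | rim_sum i == a] =
    [set i in D | rim_sum i == a] :|:
    [set i : 'I_k | (i.+1 == k) && (rim_sum i == a)].
  by apply/setP => i; rewrite !inE -andb_orl orNb.
apply: leq_trans (leq_card_setU _ _) _.
rewrite -[(a == 0%R).+1]add1n leq_add ?card_fiber_le1 //; first exact: rim_sum_inj.
have [-> | nz_a] := eqVneq a 0%R.
  have inj_succ : {in predT &, injective (fun i : 'I_k => i.+1)}.
    by move=> i j _ _ [/val_inj].
  apply: leq_trans (card_fiber_le1 k inj_succ); apply: subset_leq_card.
  by apply/subsetP => i; rewrite !inE => /andP[].
rewrite leqn0 cards_eq0; apply/eqP/setP => i; rewrite !inE.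
by apply/andP => -[/eqP/rim_sum_last-> /eqP eq0a]; rewrite eq0a eqxx in nz_a.
Qed.

Lemma card_rim_fiber0_gt0 : 0 < k -> 0 < #|[set i | rim_sum i == 0%R]|.
Proof.
move=> k_gt0; have lt_k1k : k.-1 < k by rewrite ltn_predL.
apply/card_gt0P; exists (Ordinal lt_k1k).
by rewrite inE rim_sum_last ?prednK.
Qed.

Lemma fE_fr_label (a : 'I_(k.*2.+1)) :
  fE fr_label a = (a != 0%R) + #|[set i | rim_sum i == a]|.
Proof.
by rewrite fE_friendship card_spokes_bij ?fr_label_None //; exact: fr_label_bij.
Qed.

Lemma fE_fr_label_bounds (a : 'I_(k.*2.+1)) : 0 < k -> 1 <= fE fr_label a <= 2.
Proof.
move=> k_gt0; rewrite fE_fr_label; have := card_rim_fiber_le a.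
by case: eqP => [-> | _] /=; rewrite ?card_rim_fiber0_gt0.
Qed.

End CordialFriendship.

Theorem theorem11p1 (k : nat) :
  @A_cordial 'I_(k.*2.+1) (friendship k).
Proof.
have [-> | k_gt0] := posnP k.
  by exists (fun _ => ord0) => a1 a2; rewrite (ord1 a1) (ord1 a2) !leqnSn.
exists (@fr_label k); apply: (cordial_labeling_bij (c := 1)) (@fr_label_bij k) _.
by move=> a; apply: fE_fr_label_bounds.
Qed.
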